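(* Let $W\subset\mathbb{R}$ have no isolated points and satisfy $0\in W$. Let $\Psi:\mathbb{R}\to\mathbb{R}$ be $C^\infty$ on some open interval $I$ and not equal to a polynomial on $I$. Then for each integer $n\ge0$ the function $x\mapsto x^n$ can be approximated uniformly on every compact subset of $\mathbb{R}$ by elements of $\mathcal{N}_1(\Psi,W,I)=\mathrm{span}\{x\mapsto\Psi(wx+b):w\in W,\ b\in I\}$. In particular, $\mathcal{N}_1(\Psi,W,I)$ is dense in $C(\mathbb{R})$ in the sense of uniform convergence on compact sets.
   Context: A set $S$ of functions $\mathbb{R}\to\mathbb{R}$ is dense in $C(\mathbb{R})$ in the sense of uniform convergence on compact sets if for every nonempty compact $K\subset\mathbb{R}$, every $g\in C(\mathbb{R})$ and every $\varepsilon>0$ there is $s\in S$ with $\sup_{x\in K}|s(x)-g(x)|<\varepsilon$. ''$W$ has no isolated points'' means every point of $W$ is a limit of points of $W\setminus\{w\}$. *)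

From Stdlib Require Import Reals Lra List.
From Stdlib Require Rtopology.
From Coquelicot Require Import Coquelicot.
Open Scope R_scope.

Definition in_ival (a b : Rbar) (x : R) : Prop := Rbar_lt a x /\ Rbar_lt x b.

Definition no_isolated_points (W : R -> Prop) : Prop :=
  forall w, W w -> forall e, 0 < e -> exists v, W v /\ v <> w /\ Rabs (v - w) < e.

Definition smooth_on (Psi : R -> R) (a b : Rbar) : Prop :=
  forall (k : nat) (x : R), in_ival a b x -> ex_derive_n Psi k x.

Definition is_poly_on (Psi : R -> R) (a b : Rbar) : Prop :=
  exists (d : nat) (c : nat -> R),
    forall x, in_ival a b x -> Psi x = sum_f_R0 (fun k => c k * x ^ k) d.

Definition eval_comb (Psi : R -> R) (l : list (R * R * R)) (x : R) : R :=
  fold_right (fun t acc => let '(c, w, b) := t in c * Psi (w * x + b) + acc) 0 l.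

Definition in_N1 (Psi : R -> R) (W : R -> Prop) (a b : Rbar) (f : R -> R) : Prop :=
  exists l : list (R * R * R),
    List.Forall (fun t : R * R * R => W (snd (fst t)) /\ in_ival a b (snd t)) l /\
    forall x, f x = eval_comb Psi l x.

Definition sup_dist_lt (K : R -> Prop) (s g : R -> R) (eps : R) : Prop :=
  exists d, d < eps /\ forall x, K x -> Rabs (s x - g x) <= d.

Definition approximable (S : (R -> R) -> Prop) (g : R -> R) : Prop :=
  forall K : R -> Prop, Rtopology.compact K -> (exists x, K x) ->
  forall eps, 0 < eps -> exists s, S s /\ sup_dist_lt K s g eps.

Definition dense_in_CR (S : (R -> R) -> Prop) : Prop :=
  forall g : R -> R, (forall x, continuity_pt g x) -> approximable S g.

(* Write D_k for the k-th derivative of Psi and fix b0 in I. For w in W near 0,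
   the function x |-> x^k D_k(w x + b0) is a uniform limit on [-r, r] of elements
   of N_1(Psi, W, I): for k = 0 it is a generator, and x^(k+1) D_(k+1)(w x + b0)
   is the uniform limit, as v -> w through W \ {w}, of the difference quotients
   (x^k D_k(v x + b0) - x^k D_k(w x + b0)) / (v - w); this is where W must have no
   isolated points. Taking w = 0 gives x^n D_n(b0), and b0 can be chosen with
   D_n(b0) <> 0, since otherwise Taylor's formula makes Psi a polynomial on I.
   Hence every polynomial is approximable, and density follows from the
   Weierstrass approximation theorem, proved with Bernstein polynomials. *)

From Stdlib Require Import Reals Lra Lia List Classical.
From Coquelicot Require Import Coquelicot.
Open Scope R_scope.

(** * Polynomial functions *)

Fixpoint peval (l : list R) (x : R) : R :=
  match l with nil => 0 | c :: l' => c + x * peval l' x end.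

Fixpoint padd (l1 l2 : list R) : list R :=
  match l1, l2 with
  | nil, _ => l2
  | _, nil => l1
  | c1 :: r1, c2 :: r2 => (c1 + c2) :: padd r1 r2
  end.

Fixpoint pmul (l1 l2 : list R) : list R :=
  match l1 with
  | nil => nil
  | c :: r => padd (map (Rmult c) l2) (0 :: pmul r l2)
  end.

Lemma peval_padd l1 l2 x : peval (padd l1 l2) x = peval l1 x + peval l2 x.
Proof.
  revert l2; induction l1 as [|c1 r1 IH]; intros [|c2 r2]; simpl; try ring.
  rewrite IH; ring.
Qed.

Lemma peval_scal k l x : peval (map (Rmult k) l) x = k * peval l x.
Proof. induction l as [|c l IH]; simpl; rewrite ?IH; ring. Qed.

Lemma peval_pmul l1 l2 x : peval (pmul l1 l2) x = peval l1 x * peval l2 x.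
Proof.
  induction l1 as [|c r IH]; simpl; [ring|].
  rewrite peval_padd, peval_scal; simpl; rewrite IH; ring.
Qed.

Lemma peval_sum_f_R0 l x :
  peval l x = sum_f_R0 (fun k => nth k l 0 * x ^ k) (length l).
Proof.
  induction l as [|c l IH]; simpl length; [simpl; ring|].
  rewrite decomp_sum by lia. simpl pred. simpl peval.
  rewrite IH, scal_sum. simpl. f_equal; [ring|].
  apply sum_eq; intros; simpl; ring.
Qed.

Definition poly_fun (f : R -> R) : Prop := exists l, forall x, f x = peval l x.

Lemma poly_fun_ext f g : (forall x, f x = g x) -> poly_fun f -> poly_fun g.
Proof. intros E [l H]; exists l; intros x; rewrite <- E; auto. Qed.

Lemma poly_fun_affine k c : poly_fun (fun x => k * x + c).
Proof. exists (c :: k :: nil); intros x; simpl; ring. Qed.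

Lemma poly_fun_add f g : poly_fun f -> poly_fun g -> poly_fun (fun x => f x + g x).
Proof.
  intros [l1 H1] [l2 H2]; exists (padd l1 l2); intros x.
  rewrite peval_padd, H1, H2; reflexivity.
Qed.

Lemma poly_fun_mul f g : poly_fun f -> poly_fun g -> poly_fun (fun x => f x * g x).
Proof.
  intros [l1 H1] [l2 H2]; exists (pmul l1 l2); intros x.
  rewrite peval_pmul, H1, H2; reflexivity.
Qed.

Lemma poly_fun_const c : poly_fun (fun _ => c).
Proof. apply (poly_fun_ext (fun x => 0 * x + c)); [intros; ring | apply poly_fun_affine]. Qed.

Lemma poly_fun_pow f n : poly_fun f -> poly_fun (fun x => f x ^ n).
Proof.
  intros Hf; induction n as [|n IH]; simpl.
  - apply poly_fun_const.
  - apply poly_fun_mul; assumption.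
Qed.

Lemma poly_fun_sum (F : nat -> R -> R) n :
  (forall k, (k <= n)%nat -> poly_fun (F k)) ->
  poly_fun (fun x => sum_f_R0 (fun k => F k x) n).
Proof.
  induction n as [|n IH]; intros H; simpl.
  - apply H; lia.
  - apply poly_fun_add; auto.
Qed.

(** * Weierstrass approximation *)

Definition bernstein (n k : nat) (t : R) : R :=
  Binomial.C n k * t ^ k * (1 - t) ^ (n - k).

Lemma bernstein_nonneg n k t : 0 <= t <= 1 -> 0 <= bernstein n k t.
Proof.
  intros Ht. unfold bernstein, Binomial.C.
  pose proof (INR_fact_lt_0 n); pose proof (INR_fact_lt_0 k);
    pose proof (INR_fact_lt_0 (n - k)).
  apply Rmult_le_pos; [apply Rmult_le_pos|]; try (apply pow_le; lra).
  apply Rlt_le, Rdiv_lt_0_compat; [assumption | apply Rmult_lt_0_compat; assumption].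
Qed.

Lemma poly_fun_bernstein_sum (c : nat -> R) n k0 c0 :
  poly_fun (fun x => sum_f_R0 (fun k => c k * bernstein n k (k0 * x + c0)) n).
Proof.
  apply poly_fun_sum; intros k _. unfold bernstein.
  apply poly_fun_mul; [apply poly_fun_const|].
  apply poly_fun_mul; [apply poly_fun_mul; [apply poly_fun_const|]|];
    apply poly_fun_pow; [apply poly_fun_affine|].
  apply (poly_fun_ext (fun x => (- k0) * x + (1 - c0))); [intros; ring | apply poly_fun_affine].
Qed.

Lemma binomial_absorption p i :
  (i <= p)%nat -> INR (S i) * Binomial.C (S p) (S i) = INR (S p) * Binomial.C p i.
Proof.
  intros Hi. unfold Binomial.C. replace (S p - S i)%nat with (p - i)%nat by lia.
  change (Factorial.fact (S p)) with (S p * Factorial.fact p)%nat.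
  change (Factorial.fact (S i)) with (S i * Factorial.fact i)%nat.
  rewrite !mult_INR.
  pose proof (INR_fact_neq_0 p); pose proof (INR_fact_neq_0 i);
    pose proof (INR_fact_neq_0 (p - i)).
  assert (INR (S i) <> 0) by (apply not_0_INR; lia).
  field; auto.
Qed.

Lemma sum_bernstein_index (h : nat -> R) p t :
  sum_f_R0 (fun k => h k * INR k * bernstein (S p) k t) (S p) =
  INR (S p) * t * sum_f_R0 (fun j => h (S j) * bernstein p j t) p.
Proof.
  rewrite decomp_sum by lia. simpl pred. rewrite scal_sum.
  replace (h 0%nat * INR 0 * _) with 0 by (simpl; ring). rewrite Rplus_0_l.
  apply sum_eq; intros i Hi. unfold bernstein.
  replace (S p - S i)%nat with (p - i)%nat by lia.
  replace (h (S i) * INR (S i) * (Binomial.C (S p) (S i) * t ^ S i * (1 - t) ^ (p - i)))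
    with (h (S i) * (INR (S i) * Binomial.C (S p) (S i)) * t ^ S i * (1 - t) ^ (p - i))
    by ring.
  rewrite binomial_absorption by lia. simpl pow. ring.
Qed.

Lemma bernstein_sum n t : sum_f_R0 (fun k => bernstein n k t) n = 1.
Proof.
  unfold bernstein. rewrite <- binomial. replace (t + (1 - t)) with 1 by ring. apply pow1.
Qed.

Lemma bernstein_sum_index n t :
  sum_f_R0 (fun k => INR k * bernstein n k t) n = INR n * t.
Proof.
  destruct n as [|p]; [simpl; ring|].
  transitivity (sum_f_R0 (fun k => 1 * INR k * bernstein (S p) k t) (S p));
    [apply sum_eq; intros; ring|].
  rewrite sum_bernstein_index.
  rewrite (sum_eq _ (fun j => bernstein p j t)), bernstein_sum by (intros; ring). ring.
Qed.

Lemma bernstein_sum_index_sq n t :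
  sum_f_R0 (fun k => INR k * INR k * bernstein n k t) n = INR n * t * ((INR n - 1) * t + 1).
Proof.
  destruct n as [|p]; [simpl; ring|].
  rewrite sum_bernstein_index.
  rewrite (sum_eq _ (fun j => INR j * bernstein p j t + bernstein p j t))
    by (intros; rewrite S_INR; ring).
  rewrite sum_plus, bernstein_sum, bernstein_sum_index, S_INR. ring.
Qed.

Lemma bernstein_variance n t : (0 < n)%nat ->
  sum_f_R0 (fun k => (INR k / INR n - t) ^ 2 * bernstein n k t) n = t * (1 - t) / INR n.
Proof.
  intros Hn. assert (INR n <> 0) by (apply not_0_INR; lia).
  rewrite (sum_eq _ (fun k => INR k * INR k * bernstein n k t * / (INR n * INR n)
                             + INR k * bernstein n k t * (- 2 * t / INR n)
                             + bernstein n k t * (t * t)))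
    by (intros; field; assumption).
  rewrite !sum_plus, <- !scal_sum, bernstein_sum, bernstein_sum_index,
    bernstein_sum_index_sq.
  field; assumption.
Qed.

Lemma Rabs_le_modulus_quadratic u z e M d :
  0 <= e -> 0 < d -> Rabs u <= 2 * M -> (Rabs z < d -> Rabs u <= e) ->
  Rabs u <= e + 2 * M / (d * d) * z ^ 2.
Proof.
  intros He Hd HM Hmod.
  assert (Hc : 0 <= 2 * M / (d * d)).
  { pose proof (Rabs_pos u). apply Rmult_le_pos; [lra|].
    apply Rlt_le, Rinv_0_lt_compat; nra. }
  destruct (Rlt_or_le (Rabs z) d) as [Hz|Hz].
  - specialize (Hmod Hz). pose proof (Rmult_le_pos _ _ Hc (pow2_ge_0 z)). lra.
  - assert (Hz2 : d * d <= z ^ 2) by (rewrite <- pow2_abs; nra).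
    apply Rmult_le_compat_l with (r := 2 * M / (d * d)) in Hz2; [|assumption].
    replace (2 * M / (d * d) * (d * d)) with (2 * M) in Hz2 by (field; lra). lra.
Qed.

Lemma INR_div_in_unit k n : (k <= n)%nat -> 0 < INR n -> 0 <= INR k / INR n <= 1.
Proof.
  intros Hk Hn. pose proof (pos_INR k). pose proof (le_INR _ _ Hk).
  split; [apply Rmult_le_pos; [lra | apply Rlt_le, Rinv_0_lt_compat; lra]|].
  apply (Rmult_le_reg_r (INR n)); [assumption|].
  unfold Rdiv; rewrite Rmult_assoc, Rinv_l by lra. lra.
Qed.

Lemma exists_INR_div_lt c e : 0 < e -> exists n, (0 < n)%nat /\ c / INR n < e.
Proof.
  intros He. destruct (INR_unbounded (Rabs c / e)) as [n0 Hn0].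
  assert (Hn : 0 < INR (S n0)) by (apply lt_0_INR; lia).
  exists (S n0); split; [lia|].
  apply (Rmult_lt_reg_r (INR (S n0))); [assumption|].
  unfold Rdiv; rewrite Rmult_assoc, Rinv_l, Rmult_1_r by lra.
  apply Rle_lt_trans with (Rabs c); [apply Rle_abs|].
  apply (Rmult_lt_reg_r (/ e)); [apply Rinv_0_lt_compat; lra|].
  replace (e * INR (S n0) * / e) with (INR (S n0)) by (field; lra).
  rewrite S_INR. unfold Rdiv in Hn0. lra.
Qed.

Lemma bernstein_approx f M e d : 0 < e -> 0 < d ->
  (forall s t, 0 <= s <= 1 -> 0 <= t <= 1 -> Rabs (s - t) < d -> Rabs (f s - f t) <= e) ->
  (forall s, 0 <= s <= 1 -> Rabs (f s) <= M) ->
  exists n, forall t, 0 <= t <= 1 ->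
    Rabs (sum_f_R0 (fun k => f (INR k / INR n) * bernstein n k t) n - f t) <= 2 * e.
Proof.
  intros He Hd Hmod Hbd.
  set (c := 2 * M / (d * d)).
  assert (Hc : 0 <= c).
  { pose proof (Rle_trans _ _ _ (Rabs_pos _) (Hbd 0 ltac:(lra))).
    apply Rmult_le_pos; [lra|]. apply Rlt_le, Rinv_0_lt_compat; nra. }
  destruct (exists_INR_div_lt c e He) as [n [Hn0 Hcn]].
  assert (Hn : 0 < INR n) by (apply lt_0_INR; exact Hn0).
  exists n. intros t Ht.
  assert (Hpt : forall s, 0 <= s <= 1 -> Rabs (f s - f t) <= e + c * (s - t) ^ 2).
  { intros s Hs. apply Rabs_le_modulus_quadratic; [lra | assumption | | auto].
    eapply Rle_trans; [apply Rabs_triang|]. rewrite Rabs_Ropp.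
    pose proof (Hbd s Hs); pose proof (Hbd t Ht). lra. }
  replace (f t) with (f t * sum_f_R0 (fun k => bernstein n k t) n)
    by (rewrite bernstein_sum; ring).
  rewrite scal_sum, <- minus_sum.
  (* Averaging [Hpt] against the Bernstein weights leaves e plus c times their
     variance t (1 - t) / n. *)
  eapply Rle_trans; [apply Rsum_abs|].
  apply Rle_trans with (sum_f_R0 (fun k => bernstein n k t * e
                                      + (INR k / INR n - t) ^ 2 * bernstein n k t * c) n).
  - apply sum_Rle; intros k Hk.
    replace (f (INR k / INR n) * bernstein n k t - bernstein n k t * f t)
      with ((f (INR k / INR n) - f t) * bernstein n k t) by ring.
    rewrite Rabs_mult, (Rabs_pos_eq (bernstein n k t)) by (apply bernstein_nonneg; lra).
    pose proof (Hpt _ (INR_div_in_unit k n Hk Hn)). pose proof (bernstein_nonneg n k t Ht). nra.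
  - rewrite sum_plus, <- !scal_sum, bernstein_sum, bernstein_variance by exact Hn0.
    assert (t * (1 - t) / INR n * c <= c / INR n).
    { unfold Rdiv. pose proof (Rinv_0_lt_compat _ Hn).
      replace (t * (1 - t) * / INR n * c) with (t * (1 - t) * (c * / INR n)) by ring.
      rewrite <- (Rmult_1_l (c * / INR n)) at 2.
      apply Rmult_le_compat_r; [apply Rmult_le_pos; lra | nra]. }
    lra.
Qed.

Lemma weierstrass g m M : m < M -> (forall x, m <= x <= M -> continuity_pt g x) ->
  forall eps, 0 < eps ->
  exists p, poly_fun p /\ forall x, m <= x <= M -> Rabs (p x - g x) <= eps.
Proof.
  intros HmM Hg eps Heps.
  set (L := M - m). assert (HL : 0 < L) by (unfold L; lra).
  destruct (Heine g (fun x => m <= x <= M) (compact_P3 m M) Hg (mkposreal (eps / 2) ltac:(lra)))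
    as [dg Hdg]; simpl in Hdg.
  destruct (continuity_ab_maj g m M (Rlt_le _ _ HmM) Hg) as [xM [HxM _]].
  destruct (continuity_ab_min g m M (Rlt_le _ _ HmM) Hg) as [xm [Hxm _]].
  set (f := fun s => g (m + L * s)).
  assert (Hin : forall s, 0 <= s <= 1 -> m <= m + L * s <= M) by (intros; unfold L; nra).
  destruct (bernstein_approx f (Rabs (g xM) + Rabs (g xm)) (eps / 2) (dg / L)) as [n Hn].
  - lra.
  - apply Rdiv_lt_0_compat; [apply cond_pos | assumption].
  - intros s t Hs Ht Hst. apply Rlt_le, Hdg; auto.
    replace (m + L * s - (m + L * t)) with (L * (s - t)) by ring.
    rewrite Rabs_mult, (Rabs_pos_eq L) by lra.
    apply (Rmult_lt_reg_r (/ L)); [apply Rinv_0_lt_compat; lra|].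
    replace (L * Rabs (s - t) * / L) with (Rabs (s - t)) by (field; lra). exact Hst.
  - intros s Hs. unfold f. pose proof (HxM _ (Hin s Hs)); pose proof (Hxm _ (Hin s Hs)).
    pose proof (Rle_abs (g xM)); pose proof (Rle_abs (- g xm)).
    pose proof (Rabs_pos (g xM)); pose proof (Rabs_pos (g xm)).
    rewrite Rabs_Ropp in *. apply Rabs_le. lra.
  - exists (fun x => sum_f_R0 (fun k => f (INR k / INR n) * bernstein n k (/ L * x + - m / L)) n).
    split; [apply poly_fun_bernstein_sum|].
    intros x Hx.
    assert (Ht : 0 <= / L * x + - m / L <= 1).
    { replace (/ L * x + - m / L) with ((x - m) / L) by (field; lra).
      split; [apply Rmult_le_pos; [lra | apply Rlt_le, Rinv_0_lt_compat; lra]|].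
      apply (Rmult_le_reg_r L); [assumption|].
      unfold Rdiv; rewrite Rmult_assoc, Rinv_l by lra. unfold L; lra. }
    specialize (Hn _ Ht). unfold f at 2 in Hn.
    replace (m + L * (/ L * x + - m / L)) with x in Hn by (field; lra). lra.
Qed.

(** * The span N_1 and its uniform closure *)

Section Span.
Variables (Psi : R -> R) (W : R -> Prop) (a b : Rbar).

Lemma eval_comb_app l1 l2 x :
  eval_comb Psi (l1 ++ l2) x = eval_comb Psi l1 x + eval_comb Psi l2 x.
Proof. induction l1 as [|[[c w] b'] l1 IH]; simpl; rewrite ?IH; ring. Qed.

Lemma in_N1_zero : in_N1 Psi W a b (fun _ => 0).
Proof. exists nil; split; [constructor | reflexivity]. Qed.

Lemma in_N1_add f g :
  in_N1 Psi W a b f -> in_N1 Psi W a b g -> in_N1 Psi W a b (fun x => f x + g x).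
Proof.
  intros [l1 [H1 E1]] [l2 [H2 E2]]. exists (l1 ++ l2); split.
  - apply Forall_app; auto.
  - intros x; rewrite eval_comb_app, E1, E2; reflexivity.
Qed.

Lemma in_N1_scal k f : in_N1 Psi W a b f -> in_N1 Psi W a b (fun x => k * f x).
Proof.
  intros [l [Hl E]].
  exists (map (fun t : R * R * R => let '(c, w, b') := t in (k * c, w, b')) l); split.
  - apply Forall_map. eapply Forall_impl; [|exact Hl]. now intros [[c w] b'].
  - intros x; rewrite E; clear E Hl.
    induction l as [|[[c w] b'] l IH]; simpl; rewrite <- ?IH; ring.
Qed.

Lemma in_N1_ridge w b' :
  W w -> in_ival a b b' -> in_N1 Psi W a b (fun x => Psi (w * x + b')).
Proof.
  intros Hw Hb. exists ((1, w, b') :: nil); split.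
  - constructor; [split; assumption | constructor].
  - intros x; simpl; ring.
Qed.

End Span.

Section Uniform_closure.
Variable V : (R -> R) -> Prop.

Definition approx_on (r : R) (g : R -> R) : Prop :=
  forall eps, 0 < eps ->
    exists s, V s /\ forall x, - r <= x <= r -> Rabs (s x - g x) <= eps.

Lemma approx_on_ext r g h :
  (forall x, - r <= x <= r -> g x = h x) -> approx_on r g -> approx_on r h.
Proof.
  intros E Hg eps Heps. destruct (Hg eps Heps) as [s [Hs B]].
  exists s; split; [assumption|]. intros x Hx. rewrite <- E; auto.
Qed.

Lemma approx_on_mem r f : V f -> approx_on r f.
Proof.
  intros Hf eps Heps. exists f; split; [assumption|].
  intros x _. rewrite Rminus_eq_0, Rabs_R0. lra.
Qed.

Lemma approx_on_limit r g :
  (forall eps, 0 < eps -> exists h, approx_on r h /\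
     forall x, - r <= x <= r -> Rabs (h x - g x) <= eps) ->
  approx_on r g.
Proof.
  intros H eps Heps.
  destruct (H (eps / 2)) as [h [Hh Bh]]; [lra|].
  destruct (Hh (eps / 2)) as [s [Hs Bs]]; [lra|].
  exists s; split; [assumption|]. intros x Hx.
  specialize (Bh x Hx); specialize (Bs x Hx).
  replace (s x - g x) with ((s x - h x) + (h x - g x)) by ring.
  eapply Rle_trans; [apply Rabs_triang | lra].
Qed.

Lemma approximable_of_approx_on g :
  (forall r, 0 < r -> approx_on r g) -> approximable V g.
Proof.
  intros H K HK _ eps Heps.
  destruct (compact_P1 K HK) as [m [M HmM]].
  set (r := Rabs m + Rabs M + 1).
  assert (Hr : 0 < r) by (unfold r; pose proof (Rabs_pos m); pose proof (Rabs_pos M); lra).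
  destruct (H r Hr (eps / 2)) as [s [Hs B]]; [lra|].
  exists s; split; [assumption|]. exists (eps / 2); split; [lra|].
  intros x Hx. apply B. destruct (HmM x Hx).
  pose proof (Rle_abs (- m)); pose proof (Rle_abs M).
  pose proof (Rabs_pos m); pose proof (Rabs_pos M).
  rewrite Rabs_Ropp in *. unfold r; lra.
Qed.

Hypothesis V_zero : V (fun _ => 0).
Hypothesis V_add : forall f g, V f -> V g -> V (fun x => f x + g x).
Hypothesis V_scal : forall k f, V f -> V (fun x => k * f x).

Lemma approx_on_add r f g :
  approx_on r f -> approx_on r g -> approx_on r (fun x => f x + g x).
Proof.
  intros Hf Hg eps Heps.
  destruct (Hf (eps / 2)) as [s1 [H1 B1]]; [lra|].
  destruct (Hg (eps / 2)) as [s2 [H2 B2]]; [lra|].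
  exists (fun x => s1 x + s2 x); split; [auto|].
  intros x Hx. specialize (B1 x Hx); specialize (B2 x Hx).
  replace (s1 x + s2 x - (f x + g x)) with ((s1 x - f x) + (s2 x - g x)) by ring.
  eapply Rle_trans; [apply Rabs_triang | lra].
Qed.

Lemma approx_on_scal r k f : approx_on r f -> approx_on r (fun x => k * f x).
Proof.
  intros Hf eps Heps.
  assert (Hk : 0 < Rabs k + 1) by (pose proof (Rabs_pos k); lra).
  destruct (Hf (eps / (Rabs k + 1))) as [s [Hs B]]; [apply Rdiv_lt_0_compat; lra|].
  exists (fun x => k * s x); split; [auto|].
  intros x Hx. specialize (B x Hx).
  replace (k * s x - k * f x) with (k * (s x - f x)) by ring.
  rewrite Rabs_mult.
  apply Rle_trans with ((Rabs k + 1) * (eps / (Rabs k + 1))).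
  - pose proof (Rabs_pos k); pose proof (Rabs_pos (s x - f x)).
    apply Rmult_le_compat; lra.
  - right; field; lra.
Qed.

Lemma approx_on_poly_fun r p :
  (forall n, approx_on r (fun x => x ^ n)) -> poly_fun p -> approx_on r p.
Proof.
  intros Hmono [l Hl].
  assert (Hshift : forall j, approx_on r (fun x => x ^ j * peval l x)).
  { clear Hl; induction l as [|c l IH]; intros j; simpl.
    - apply (approx_on_ext r (fun _ => 0)); [intros; ring | apply approx_on_mem, V_zero].
    - apply (approx_on_ext r (fun x => c * x ^ j + x ^ S j * peval l x));
        [intros; simpl; ring|].
      apply approx_on_add; [apply approx_on_scal, Hmono | apply IH]. }
  apply (approx_on_ext r (fun x => x ^ 0 * peval l x)); [|apply Hshift].
  intros x _; rewrite Hl; simpl; ring.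
Qed.

End Uniform_closure.

(** * Taylor expansion on an interval *)

Lemma in_ival_ball a b x :
  in_ival a b x -> exists r, 0 < r /\ forall y, Rabs (y - x) <= r -> in_ival a b y.
Proof.
  intros [Ha Hb].
  assert (HA : exists ra, 0 < ra /\ forall y, Rabs (y - x) <= ra -> Rbar_lt a y).
  { destruct a as [a0| |]; simpl in Ha |- *; try contradiction.
    - exists ((x - a0) / 2); split; [lra|].
      intros y Hy; apply Rabs_le_between' in Hy; simpl; lra.
    - exists 1; split; [lra | intros; exact I]. }
  assert (HB : exists rb, 0 < rb /\ forall y, Rabs (y - x) <= rb -> Rbar_lt y b).
  { destruct b as [b0| |]; simpl in Hb |- *; try contradiction.
    - exists ((b0 - x) / 2); split; [lra|].
      intros y Hy; apply Rabs_le_between' in Hy; simpl; lra.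
    - exists 1; split; [lra | intros; exact I]. }
  destruct HA as [ra [Hra HA]], HB as [rb [Hrb HB]].
  exists (Rmin ra rb); split; [apply Rmin_pos; assumption|].
  intros y Hy; split; [apply HA | apply HB];
    (eapply Rle_trans; [exact Hy | first [apply Rmin_l | apply Rmin_r]]).
Qed.

Lemma in_ival_locally a b x : in_ival a b x -> locally x (in_ival a b).
Proof.
  intros Hx. destruct (in_ival_ball a b x Hx) as [r [Hr Hball]].
  exists (mkposreal r Hr). intros y Hy. apply Hball, Rlt_le, Hy.
Qed.

Lemma in_ival_between a b x y t :
  in_ival a b x -> in_ival a b y -> x <= t <= y -> in_ival a b t.
Proof.
  intros [Hxa Hxb] [Hya Hyb] Ht. split.
  - destruct a as [a0| |]; simpl in *; auto; lra.
  - destruct b as [b0| |]; simpl in *; auto; lra.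
Qed.

Lemma in_ival_inhabited a b : Rbar_lt a b -> exists x, in_ival a b x.
Proof.
  intros H. unfold in_ival.
  destruct a as [a0| |], b as [b0| |]; simpl in *; try contradiction.
  - exists ((a0 + b0) / 2); simpl; lra.
  - exists (a0 + 1); simpl; lra.
  - exists (b0 - 1); simpl; lra.
  - exists 0; simpl; auto.
Qed.

Lemma Taylor_Lagrange_left f n x y : y < x ->
  (forall t, y <= t <= x ->
     locally t (fun z => forall k, (k <= S n)%nat -> ex_derive_n f k z)) ->
  exists zeta, y < zeta < x /\
    f y = sum_f_R0 (fun m => (y - x) ^ m / INR (Factorial.fact m) * Derive_n f m x) n
          + (y - x) ^ S n / INR (Factorial.fact (S n)) * Derive_n f (S n) zeta.
Proof.
  intros Hyx Hf.
  assert (Hg : forall t, - x <= t <= - y -> forall m, (m <= S n)%nat ->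
            Derive_n (fun u => f (- u)) m t = (-1) ^ m * Derive_n f m (- t)).
  { intros t Ht m Hm. apply Derive_n_comp_opp.
    apply (filter_imp (fun z => forall k, (k <= S n)%nat -> ex_derive_n f k z));
      [intros z Hz k Hk; apply Hz; lia | apply Hf; lra]. }
  destruct (Taylor_Lagrange (fun u => f (- u)) n (- x) (- y)) as [z [Hz E]]; [lra| |].
  { intros t Ht k Hk. apply ex_derive_n_comp_opp.
    apply (filter_imp (fun z => forall k, (k <= S n)%nat -> ex_derive_n f k z));
      [intros z Hz j Hj; apply Hz; lia | apply Hf; lra]. }
  exists (- z); split; [lra|].
  rewrite Ropp_involutive in E. rewrite E, Hg by (auto; lra).
  replace (- y - - x) with (-1 * (y - x)) by ring.
  assert (Hsign : forall m, (-1 * (y - x)) ^ m * (-1) ^ m = (y - x) ^ m).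
  { intros m. rewrite Rpow_mult_distr, Rmult_comm, <- Rmult_assoc, <- Rpow_mult_distr.
    replace (-1 * -1) with 1 by ring. rewrite pow1. ring. }
  f_equal.
  - apply sum_eq; intros m Hm. rewrite Hg, Ropp_involutive by (lra || lia).
    rewrite <- Hsign. unfold Rdiv. ring.
  - rewrite <- Hsign. unfold Rdiv. ring.
Qed.

Definition taylor_poly (f : R -> R) (n : nat) (c y : R) : R :=
  sum_f_R0 (fun m => (y - c) ^ m / INR (Factorial.fact m) * Derive_n f m c) n.

Lemma taylor_poly_center f n c : taylor_poly f n c c = f c.
Proof.
  unfold taylor_poly. induction n as [|n IH]; simpl; [field|].
  rewrite IH, Rminus_eq_0. simpl. unfold Rdiv. ring.
Qed.

Lemma poly_fun_taylor_poly f n c : poly_fun (taylor_poly f n c).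
Proof.
  apply poly_fun_sum; intros m _.
  apply (poly_fun_ext (fun y => (1 * y + - c) ^ m * (Derive_n f m c / INR (Factorial.fact m)))).
  - intros y; replace (1 * y + - c) with (y - c) by ring; unfold Rdiv; ring.
  - apply poly_fun_mul; [apply poly_fun_pow, poly_fun_affine | apply poly_fun_const].
Qed.

Lemma smooth_on_locally Psi a b n t : smooth_on Psi a b -> in_ival a b t ->
  locally t (fun z => forall k, (k <= n)%nat -> ex_derive_n Psi k z).
Proof.
  intros Hs Ht. apply (filter_imp (in_ival a b)); [|apply in_ival_locally; assumption].
  intros z Hz k _. apply Hs, Hz.
Qed.

Lemma Taylor_exact_of_Derive_n_zero Psi a b p c :
  smooth_on Psi a b -> in_ival a b c ->
  (forall x, in_ival a b x -> Derive_n Psi (S p) x = 0) ->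
  forall y, in_ival a b y -> Psi y = taylor_poly Psi p c y.
Proof.
  intros Hs Hc Hzero y Hy. unfold taylor_poly.
  destruct (Rtotal_order c y) as [Hcy | [<- | Hyc]].
  - destruct (Taylor_Lagrange Psi p c y Hcy) as [z [Hz ->]].
    { intros t Ht k _. apply Hs, (in_ival_between a b c y); assumption. }
    rewrite Hzero by (apply (in_ival_between a b c y); auto; lra). ring.
  - symmetry; apply taylor_poly_center.
  - destruct (Taylor_Lagrange_left Psi p c y Hyc) as [z [Hz ->]].
    { intros t Ht. apply smooth_on_locally with a b; [assumption|].
      apply (in_ival_between a b y c); assumption. }
    rewrite Hzero by (apply (in_ival_between a b y c); auto; lra). ring.
Qed.

Lemma is_poly_on_of_poly_fun Psi a b p :
  poly_fun p -> (forall x, in_ival a b x -> Psi x = p x) -> is_poly_on Psi a b.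
Proof.
  intros [l Hl] Hp. exists (length l), (fun k => nth k l 0).
  intros x Hx. rewrite Hp, Hl, peval_sum_f_R0 by assumption. reflexivity.
Qed.

Lemma not_poly_Derive_n_neq_0 Psi a b n :
  Rbar_lt a b -> smooth_on Psi a b -> ~ is_poly_on Psi a b ->
  exists x, in_ival a b x /\ Derive_n Psi n x <> 0.
Proof.
  intros Hab Hs Hnp. apply NNPP; intros Hnone. apply Hnp.
  assert (Hzero : forall x, in_ival a b x -> Derive_n Psi n x = 0).
  { intros x Hx. apply NNPP; intros Hne. apply Hnone; eauto. }
  destruct n as [|p].
  - apply (is_poly_on_of_poly_fun Psi a b (fun _ => 0)); [apply poly_fun_const | exact Hzero].
  - destruct (in_ival_inhabited a b Hab) as [c Hc].
    apply (is_poly_on_of_poly_fun Psi a b (taylor_poly Psi p c));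
      [apply poly_fun_taylor_poly | apply Taylor_exact_of_Derive_n_zero; assumption].
Qed.

(** * Derivatives of ridge functions *)

Lemma uniform_derivative_on f f' lo hi :
  (forall t, lo <= t <= hi -> is_derive f t (f' t)) ->
  (forall t, lo <= t <= hi -> continuity_pt f' t) ->
  forall eps, 0 < eps -> exists eta, 0 < eta /\
    forall p q, lo <= p <= hi -> lo <= q <= hi -> Rabs (q - p) < eta ->
      Rabs (f q - f p - f' p * (q - p)) <= eps * Rabs (q - p).
Proof.
  intros Hd Hc eps Heps.
  destruct (Heine f' (fun t => lo <= t <= hi) (compact_P3 lo hi) Hc (mkposreal eps Heps))
    as [eta Heta]; simpl in Heta.
  exists eta; split; [apply cond_pos|].
  intros p q Hp Hq Hpq.
  assert (Hseg : forall t, Rmin p q <= t <= Rmax p q -> lo <= t <= hi).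
  { intros t Ht. unfold Rmin, Rmax in Ht; destruct (Rle_dec p q); lra. }
  destruct (MVT_gen f p q f') as [c [Hc' ->]].
  - intros t Ht; apply Hd, Hseg; lra.
  - intros t Ht. apply continuity_pt_filterlim, (@ex_derive_continuous R_AbsRing R_NormedModule).
    exists (f' t); apply Hd, Hseg, Ht.
  - replace (f' c * (q - p) - f' p * (q - p)) with ((f' c - f' p) * (q - p)) by ring.
    rewrite Rabs_mult. apply Rmult_le_compat_r; [apply Rabs_pos|].
    apply Rlt_le, Heta; [apply Hseg, Hc' | exact Hp |].
    eapply Rle_lt_trans; [|exact Hpq].
    apply Rabs_le_between_min_max. rewrite Rmin_comm, Rmax_comm. exact Hc'.
Qed.

Lemma difference_quotient_bound k x v w Dp Dq Dp' eps : v <> w ->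
  Rabs (Dq - Dp - Dp' * ((v - w) * x)) <= eps * Rabs ((v - w) * x) ->
  Rabs (/ (v - w) * (x ^ k * Dq) + - / (v - w) * (x ^ k * Dp) - x ^ S k * Dp')
    <= eps * Rabs x ^ S k.
Proof.
  intros Hvw Hbound.
  assert (Hvw' : Rabs (v - w) <> 0) by (apply Rabs_no_R0; lra).
  replace (/ (v - w) * (x ^ k * Dq) + - / (v - w) * (x ^ k * Dp) - x ^ S k * Dp')
    with (x ^ k / (v - w) * (Dq - Dp - Dp' * ((v - w) * x))) by (simpl; field; lra).
  rewrite Rabs_mult.
  apply Rle_trans with (Rabs (x ^ k / (v - w)) * (eps * Rabs ((v - w) * x)));
    [apply Rmult_le_compat_l; [apply Rabs_pos | exact Hbound]|].
  right. unfold Rdiv. rewrite !Rabs_mult, Rabs_inv, <- RPow_abs. simpl pow. field. exact Hvw'.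
Qed.

Lemma in_ival_affine_nbhd a b b0 r : in_ival a b b0 -> 0 < r ->
  exists rho d, 0 < d /\
    (forall t, b0 - rho <= t <= b0 + rho -> in_ival a b t) /\
    (forall w x, Rabs w < d -> - r <= x <= r -> b0 - rho <= w * x + b0 <= b0 + rho).
Proof.
  intros Hb0 Hr.
  destruct (in_ival_ball a b b0 Hb0) as [rho [Hrho Hball]].
  exists rho, (rho / r); split; [apply Rdiv_lt_0_compat; assumption|]. split.
  - intros t Ht; apply Hball, Rabs_le_between'; exact Ht.
  - intros w x Hw Hx. rewrite <- Rabs_le_between'.
    replace (w * x + b0 - b0) with (w * x) by ring. rewrite Rabs_mult.
    apply Rabs_le in Hx. pose proof (Rabs_pos w); pose proof (Rabs_pos x).
    apply Rle_trans with (rho / r * r); [nra | right; field; lra].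
Qed.

Section Derivative_ladder.
Variables (Psi : R -> R) (W : R -> Prop) (a b : Rbar).
Hypothesis Psi_smooth : smooth_on Psi a b.
Hypothesis W_perfect : no_isolated_points W.

Lemma Derive_n_is_derive k t :
  in_ival a b t -> is_derive (Derive_n Psi k) t (Derive_n Psi (S k) t).
Proof. intros Ht. apply Derive_correct, (Psi_smooth (S k)), Ht. Qed.

Lemma Derive_n_continuity_pt k t : in_ival a b t -> continuity_pt (Derive_n Psi k) t.
Proof.
  intros Ht. apply continuity_pt_filterlim, (@ex_derive_continuous R_AbsRing R_NormedModule).
  exact (Psi_smooth (S k) t Ht).
Qed.

Lemma approx_on_ridge_derivatives b0 r : in_ival a b b0 -> 0 < r ->
  exists d, 0 < d /\ forall k w, W w -> Rabs w < d ->
    approx_on (in_N1 Psi W a b) r (fun x => x ^ k * Derive_n Psi k (w * x + b0)).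
Proof.
  intros Hb0 Hr.
  destruct (in_ival_affine_nbhd a b b0 r Hb0 Hr) as [rho [d [Hd [HJ Hin]]]].
  exists d; split; [exact Hd|].
  intros k; induction k as [|k IH]; intros w Hw Hwd.
  - apply (approx_on_ext _ r (fun x => Psi (w * x + b0))); [intros; simpl; ring|].
    apply approx_on_mem, in_N1_ridge; assumption.
  - apply approx_on_limit; intros eps Heps.
    assert (HM : 0 < r ^ S k + 1) by (pose proof (pow_lt r (S k) Hr); lra).
    destruct (uniform_derivative_on (Derive_n Psi k) (Derive_n Psi (S k)) (b0 - rho) (b0 + rho)
      (fun t Ht => Derive_n_is_derive k t (HJ t Ht))
      (fun t Ht => Derive_n_continuity_pt (S k) t (HJ t Ht))
      (eps / (r ^ S k + 1)) ltac:(apply Rdiv_lt_0_compat; lra)) as [eta [Heta Hunif]].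
    assert (He : 0 < Rmin (eta / r) (d - Rabs w)).
    { apply Rmin_pos; [apply Rdiv_lt_0_compat|]; lra. }
    destruct (W_perfect w Hw _ He) as [v [Hv [Hvw Hve]]].
    assert (Hvd : Rabs v < d).
    { replace v with (w + (v - w)) by ring.
      eapply Rle_lt_trans; [apply Rabs_triang|].
      pose proof (Rmin_r (eta / r) (d - Rabs w)). lra. }
    exists (fun x => / (v - w) * (x ^ k * Derive_n Psi k (v * x + b0))
                   + - / (v - w) * (x ^ k * Derive_n Psi k (w * x + b0))).
    split.
    { apply (approx_on_add _ (in_N1_add Psi W a b));
        apply (approx_on_scal _ (in_N1_scal Psi W a b)), IH; assumption. }
    intros x Hx.
    apply Rle_trans with (eps / (r ^ S k + 1) * Rabs x ^ S k).
    + apply difference_quotient_bound; [exact Hvw|].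
      replace ((v - w) * x) with (v * x + b0 - (w * x + b0)) by ring.
      apply Hunif; [apply Hin; assumption .. |].
      replace (v * x + b0 - (w * x + b0)) with ((v - w) * x) by ring.
      rewrite Rabs_mult. apply Rabs_le in Hx.
      pose proof (Rmin_l (eta / r) (d - Rabs w)). pose proof (Rabs_pos x).
      apply Rle_lt_trans with (Rabs (v - w) * r);
        [apply Rmult_le_compat_l; [apply Rabs_pos | lra]|].
      apply Rlt_le_trans with (eta / r * r); [apply Rmult_lt_compat_r; lra | right; field; lra].
    + apply Rabs_le in Hx. pose proof (pow_incr (Rabs x) r (S k) (conj (Rabs_pos x) Hx)).
      apply Rle_trans with (eps / (r ^ S k + 1) * (r ^ S k + 1)); [|right; field; lra].
      apply Rmult_le_compat_l; [apply Rlt_le, Rdiv_lt_0_compat|]; lra.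
Qed.

End Derivative_ladder.

Lemma approx_on_monomial Psi W a b n r :
  no_isolated_points W -> W 0 -> Rbar_lt a b -> smooth_on Psi a b ->
  ~ is_poly_on Psi a b -> 0 < r ->
  approx_on (in_N1 Psi W a b) r (fun x => x ^ n).
Proof.
  intros HW HW0 Hab Hs Hnp Hr.
  destruct (not_poly_Derive_n_neq_0 Psi a b n Hab Hs Hnp) as [b0 [Hb0 Hne]].
  destruct (approx_on_ridge_derivatives Psi W a b Hs HW b0 r Hb0 Hr) as [d [Hd Hladder]].
  apply (approx_on_ext _ r
    (fun x => / Derive_n Psi n b0 * (x ^ n * Derive_n Psi n (0 * x + b0)))).
  { intros x _. rewrite Rmult_0_l, Rplus_0_l. field. exact Hne. }
  apply (approx_on_scal _ (in_N1_scal Psi W a b)), Hladder;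
    [exact HW0 | rewrite Rabs_R0; exact Hd].
Qed.

Theorem lemma4p1p5 (W : R -> Prop) (Psi : R -> R) (a b : Rbar) :
  no_isolated_points W -> W 0 ->
  Rbar_lt a b -> smooth_on Psi a b -> ~ is_poly_on Psi a b ->
  (forall n : nat, approximable (in_N1 Psi W a b) (fun x => x ^ n)) /\
  dense_in_CR (in_N1 Psi W a b).
Proof.
  intros HW HW0 Hab Hs Hnp.
  assert (Hmono : forall r n, 0 < r -> approx_on (in_N1 Psi W a b) r (fun x => x ^ n))
    by (intros; apply approx_on_monomial; assumption).
  split.
  - intros n. apply approximable_of_approx_on. intros r Hr. apply Hmono, Hr.
  - intros g Hg. apply approximable_of_approx_on. intros r Hr.
    apply approx_on_limit. intros eps Heps.
    destruct (weierstrass g (- r) r ltac:(lra) (fun x _ => Hg x) eps Heps) as [p [Hp Hpg]].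
    exists p; split; [|exact Hpg].
    apply (approx_on_poly_fun _
      (in_N1_zero Psi W a b) (in_N1_add Psi W a b) (in_N1_scal Psi W a b));
      [intros n; apply Hmono, Hr | exact Hp].
Qed.
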